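(* Let $\mathcal{C}$ be a peircean bicategory. For every arrow $c:X\to Y$, $(\neg c)^\dagger=\neg(c^\dagger)$.
   Context: Composition in diagrammatic order. A cartesian bicategory is a poset-enriched symmetric monoidal category with, for each $X$, commutative comonoid $(\mathrm{copy}_X,\mathrm{disc}_X)$ and monoid $(\mathrm{cocopy}_X,\mathrm{codisc}_X)$ forming special Frobenius bimonoids, comonoid left adjoint to monoid, every arrow $c$ satisfying $c;\mathrm{copy}\le\mathrm{copy};(c\otimes c)$ and $c;\mathrm{disc}\le\mathrm{disc}$, with standard coherence. A map is an arrow $f$ with $f;\mathrm{copy}=\mathrm{copy};(f\otimes f)$ and $f;\mathrm{disc}=\mathrm{disc}$. A peircean bicategory is a cartesian bicategory whose homsets carry Boolean algebras (with the given order) such that $f;\neg c=\neg(f;c)$ for every map $f:X\to Y$ and arrow $c:Y\to Z$. The converse of $c:X\to Y$ is $c^\dagger=(\mathrm{id}_Y\otimes(\mathrm{codisc}_X;\mathrm{copy}_X));(\mathrm{id}_Y\otimes c\otimes\mathrm{id}_X);((\mathrm{cocopy}_Y;\mathrm{disc}_Y)\otimes\mathrm{id}_X):Y\to X$. *)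

(* Plain Rocq (no library needed). Peircean bicategories, following the paper:
   composition is written in DIAGRAMMATIC order: comp f g = f ; g. *)

Record Sig := {
  ob : Type;
  hom : ob -> ob -> Type;
  le : forall X Y : ob, hom X Y -> hom X Y -> Prop;
  idm : forall X : ob, hom X X;
  comp : forall X Y Z : ob, hom X Y -> hom Y Z -> hom X Z;
  tob : ob -> ob -> ob;
  unit : ob;
  tens : forall X Y X' Y' : ob, hom X Y -> hom X' Y' -> hom (tob X X') (tob Y Y');
  assoc : forall X Y Z : ob, hom (tob (tob X Y) Z) (tob X (tob Y Z));
  assoc_i : forall X Y Z : ob, hom (tob X (tob Y Z)) (tob (tob X Y) Z);
  lu : forall X : ob, hom (tob unit X) X;
  lu_i : forall X : ob, hom X (tob unit X);
  ru : forall X : ob, hom (tob X unit) X;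
  ru_i : forall X : ob, hom X (tob X unit);
  sym : forall X Y : ob, hom (tob X Y) (tob Y X);
  copy : forall X : ob, hom X (tob X X);
  disc : forall X : ob, hom X unit;
  cocopy : forall X : ob, hom (tob X X) X;
  codisc : forall X : ob, hom unit X;
  bmeet : forall X Y : ob, hom X Y -> hom X Y -> hom X Y;
  bjoin : forall X Y : ob, hom X Y -> hom X Y -> hom X Y;
  btop : forall X Y : ob, hom X Y;
  bbot : forall X Y : ob, hom X Y;
  bneg : forall X Y : ob, hom X Y -> hom X Y
}.

Arguments hom {s} _ _.
Arguments le {s X Y} _ _.
Arguments idm {s} X.
Arguments comp {s X Y Z} _ _.
Arguments tob {s} _ _.
Arguments unit {s}.
Arguments tens {s X Y X' Y'} _ _.
Arguments assoc {s} X Y Z.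
Arguments assoc_i {s} X Y Z.
Arguments lu {s} X.
Arguments lu_i {s} X.
Arguments ru {s} X.
Arguments ru_i {s} X.
Arguments sym {s} X Y.
Arguments copy {s} X.
Arguments disc {s} X.
Arguments cocopy {s} X.
Arguments codisc {s} X.
Arguments bmeet {s X Y} _ _.
Arguments bjoin {s X Y} _ _.
Arguments btop {s} X Y.
Arguments bbot {s} X Y.
Arguments bneg {s X Y} _.

Declare Scope cb_scope.
Delimit Scope cb_scope with cb.
Notation "f ;; g" := (comp f g) (at level 40, left associativity) : cb_scope.
Notation "f ⊗ g" := (tens f g) (at level 34, left associativity) : cb_scope.
Notation "f ≤ g" := (le f g) (at level 70, no associativity) : cb_scope.
Open Scope cb_scope.

Definition mid {S : Sig} (X Y : ob S) : hom (tob (tob X X) (tob Y Y)) (tob (tob X Y) (tob X Y)) :=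
  assoc X X (tob Y Y) ;;
  (idm X ⊗ (assoc_i X Y Y ;; (sym X Y ⊗ idm Y) ;; assoc Y X Y)) ;;
  assoc_i X Y (tob X Y).

Definition mid_i {S : Sig} (X Y : ob S) : hom (tob (tob X Y) (tob X Y)) (tob (tob X X) (tob Y Y)) :=
  assoc X Y (tob X Y) ;;
  (idm X ⊗ (assoc_i Y X Y ;; (sym Y X ⊗ idm Y) ;; assoc X Y Y)) ;;
  assoc_i X X (tob Y Y).

Record SMPosLaws (S : Sig) : Prop := {
  le_refl : forall (X Y : ob S) (f : hom X Y), f ≤ f;
  le_trans : forall (X Y : ob S) (f g h : hom X Y), f ≤ g -> g ≤ h -> f ≤ h;
  le_antisym : forall (X Y : ob S) (f g : hom X Y), f ≤ g -> g ≤ f -> f = g;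
  comp_mono : forall (X Y Z : ob S) (f f' : hom X Y) (g g' : hom Y Z),
      f ≤ f' -> g ≤ g' -> f ;; g ≤ f' ;; g';
  tens_mono : forall (X Y X' Y' : ob S) (f f' : hom X Y) (g g' : hom X' Y'),
      f ≤ f' -> g ≤ g' -> f ⊗ g ≤ f' ⊗ g';
  comp_id_l : forall (X Y : ob S) (f : hom X Y), idm X ;; f = f;
  comp_id_r : forall (X Y : ob S) (f : hom X Y), f ;; idm Y = f;
  comp_assoc : forall (X Y Z W : ob S) (f : hom X Y) (g : hom Y Z) (h : hom Z W),
      (f ;; g) ;; h = f ;; (g ;; h);
  tens_id : forall X Y : ob S, idm X ⊗ idm Y = idm (tob X Y);
  tens_comp : forall (X Y Z X' Y' Z' : ob S) (f : hom X Y) (g : hom Y Z)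
      (f' : hom X' Y') (g' : hom Y' Z'), (f ;; g) ⊗ (f' ;; g') = (f ⊗ f') ;; (g ⊗ g');
  assoc_iso1 : forall X Y Z : ob S, assoc X Y Z ;; assoc_i X Y Z = idm _;
  assoc_iso2 : forall X Y Z : ob S, assoc_i X Y Z ;; assoc X Y Z = idm _;
  lu_iso1 : forall X : ob S, lu X ;; lu_i X = idm _;
  lu_iso2 : forall X : ob S, lu_i X ;; lu X = idm _;
  ru_iso1 : forall X : ob S, ru X ;; ru_i X = idm _;
  ru_iso2 : forall X : ob S, ru_i X ;; ru X = idm _;
  sym_inv : forall X Y : ob S, sym X Y ;; sym Y X = idm _;
  assoc_nat : forall (X X' Y Y' Z Z' : ob S) (f : hom X X') (g : hom Y Y') (h : hom Z Z'),
      ((f ⊗ g) ⊗ h) ;; assoc X' Y' Z' = assoc X Y Z ;; (f ⊗ (g ⊗ h));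
  lu_nat : forall (X Y : ob S) (f : hom X Y), (idm unit ⊗ f) ;; lu Y = lu X ;; f;
  ru_nat : forall (X Y : ob S) (f : hom X Y), (f ⊗ idm unit) ;; ru Y = ru X ;; f;
  sym_nat : forall (X X' Y Y' : ob S) (f : hom X X') (g : hom Y Y'),
      (f ⊗ g) ;; sym X' Y' = sym X Y ;; (g ⊗ f);
  pentagon : forall W X Y Z : ob S,
      (assoc W X Y ⊗ idm Z) ;; assoc W (tob X Y) Z ;; (idm W ⊗ assoc X Y Z)
      = assoc (tob W X) Y Z ;; assoc W X (tob Y Z);
  triangle : forall X Y : ob S,
      assoc X unit Y ;; (idm X ⊗ lu Y) = ru X ⊗ idm Y;
  hexagon : forall X Y Z : ob S,
      assoc X Y Z ;; sym X (tob Y Z) ;; assoc Y Z X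
      = (sym X Y ⊗ idm Z) ;; assoc Y X Z ;; (idm Y ⊗ sym X Z)
}.

Record CartLaws (S : Sig) : Prop := {
  copy_assoc : forall X : ob S,
      copy X ;; (copy X ⊗ idm X) ;; assoc X X X = copy X ;; (idm X ⊗ copy X);
  copy_unit_l : forall X : ob S, copy X ;; (disc X ⊗ idm X) ;; lu X = idm X;
  copy_unit_r : forall X : ob S, copy X ;; (idm X ⊗ disc X) ;; ru X = idm X;
  copy_comm : forall X : ob S, copy X ;; sym X X = copy X;
  cocopy_assoc : forall X : ob S,
      assoc X X X ;; (idm X ⊗ cocopy X) ;; cocopy X = (cocopy X ⊗ idm X) ;; cocopy X;
  cocopy_unit_l : forall X : ob S, lu_i X ;; (codisc X ⊗ idm X) ;; cocopy X = idm X;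
  cocopy_unit_r : forall X : ob S, ru_i X ;; (idm X ⊗ codisc X) ;; cocopy X = idm X;
  cocopy_comm : forall X : ob S, sym X X ;; cocopy X = cocopy X;
  frob_l : forall X : ob S,
      (copy X ⊗ idm X) ;; assoc X X X ;; (idm X ⊗ cocopy X) = cocopy X ;; copy X;
  frob_r : forall X : ob S,
      (idm X ⊗ copy X) ;; assoc_i X X X ;; (cocopy X ⊗ idm X) = cocopy X ;; copy X;
  special : forall X : ob S, copy X ;; cocopy X = idm X;
  adj_copy_unit : forall X : ob S, idm X ≤ copy X ;; cocopy X;
  adj_copy_counit : forall X : ob S, cocopy X ;; copy X ≤ idm (tob X X);
  adj_disc_unit : forall X : ob S, idm X ≤ disc X ;; codisc X;
  adj_disc_counit : forall X : ob S, codisc X ;; disc X ≤ idm unit;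
  lax_copy : forall (X Y : ob S) (c : hom X Y), c ;; copy Y ≤ copy X ;; (c ⊗ c);
  lax_disc : forall (X Y : ob S) (c : hom X Y), c ;; disc Y ≤ disc X;
  copy_tens : forall X Y : ob S, copy (tob X Y) = (copy X ⊗ copy Y) ;; mid X Y;
  disc_tens : forall X Y : ob S, disc (tob X Y) = (disc X ⊗ disc Y) ;; lu unit;
  copy_unit : copy (@unit S) = lu_i unit;
  disc_unit : disc (@unit S) = idm unit;
  cocopy_tens : forall X Y : ob S, cocopy (tob X Y) = mid_i X Y ;; (cocopy X ⊗ cocopy Y);
  codisc_tens : forall X Y : ob S, codisc (tob X Y) = lu_i unit ;; (codisc X ⊗ codisc Y);
  cocopy_unit : cocopy (@unit S) = lu unit;
  codisc_unit : codisc (@unit S) = idm unit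
}.

Record BoolLaws (S : Sig) : Prop := {
  meet_glb : forall (X Y : ob S) (a b h : hom X Y), h ≤ bmeet a b <-> (h ≤ a /\ h ≤ b);
  join_lub : forall (X Y : ob S) (a b h : hom X Y), bjoin a b ≤ h <-> (a ≤ h /\ b ≤ h);
  top_max : forall (X Y : ob S) (a : hom X Y), a ≤ btop X Y;
  bot_min : forall (X Y : ob S) (a : hom X Y), bbot X Y ≤ a;
  distrib : forall (X Y : ob S) (a b c : hom X Y),
      bmeet a (bjoin b c) = bjoin (bmeet a b) (bmeet a c);
  neg_meet : forall (X Y : ob S) (a : hom X Y), bmeet a (bneg a) = bbot X Y;
  neg_join : forall (X Y : ob S) (a : hom X Y), bjoin a (bneg a) = btop X Y
}.

Definition is_map {S : Sig} {X Y : ob S} (f : hom X Y) : Prop :=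
  f ;; copy Y = copy X ;; (f ⊗ f) /\ f ;; disc Y = disc X.

Record CartesianBicategory := {
  cb_sig :> Sig;
  cb_smc : SMPosLaws cb_sig;
  cb_cart : CartLaws cb_sig
}.

Record PeirceanBicategory := {
  pb_cb :> CartesianBicategory;
  pb_bool : BoolLaws pb_cb;
  pb_peirce : forall (X Y Z : ob pb_cb) (f : hom X Y) (c : hom Y Z),
      is_map f -> f ;; bneg c = bneg (f ;; c)
}.

(* converse of c : X -> Y, as in the paper, with the (implicit) structural
   isomorphisms made explicit:
   Y -> Y⊗I -> Y⊗(X⊗X) -> (Y⊗X)⊗X -> (Y⊗Y)⊗X -> I⊗X -> X *)
Definition conv {S : Sig} {X Y : ob S} (c : hom X Y) : hom Y X :=
  ru_i Y ;; (idm Y ⊗ (codisc X ;; copy X)) ;; assoc_i Y X X ;;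
  ((idm Y ⊗ c) ⊗ idm X) ;; ((cocopy Y ;; disc Y) ⊗ idm X) ;; lu X.

(* The converse is an involution.  The arrows cup := codisc ; copy and
   cap := cocopy ; disc satisfy the zigzag equations (Frobenius and unit laws),
   so every object is self-dual and d |-> cup ; (1 ⊗ d) is a bijection
   hom Y X ~ hom I (Y ⊗ X).  The name of conv c is that of c followed by the
   symmetry, which cup absorbs because copy is commutative; hence
   conv (conv c) = c.  Being also monotone, conv is an order isomorphism
   hom X Y ~ hom Y X, and order isomorphisms between Boolean algebras preserve
   complements. *)

From Corelib Require Import ssreflect ssrfun.

Section Monoidal.
Context {S : Sig}.
Hypothesis L : SMPosLaws S.
Local Notation I := (@unit S).

Lemma le_hom_refl {X Y : ob S} (f : hom X Y) : f ≤ f.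
Proof. exact: (le_refl _ L). Qed.

Lemma le_hom_trans {X Y : ob S} {f g h : hom X Y} : f ≤ g -> g ≤ h -> f ≤ h.
Proof. exact: (le_trans _ L). Qed.

Lemma compA {X Y Z W : ob S} (f : hom X Y) (g : hom Y Z) (h : hom Z W) :
  f ;; g ;; h = f ;; (g ;; h).
Proof. exact: (comp_assoc _ L). Qed.

Lemma id_comp {X Y : ob S} (f : hom X Y) : idm X ;; f = f.
Proof. exact: (comp_id_l _ L). Qed.

Lemma comp_id {X Y : ob S} (f : hom X Y) : f ;; idm Y = f.
Proof. exact: (comp_id_r _ L). Qed.

Lemma tens_idm (X Y : ob S) : idm X ⊗ idm Y = idm (tob X Y).
Proof. exact: (tens_id _ L). Qed.

Lemma tensM {X Y Z X' Y' Z' : ob S} (f : hom X Y) (g : hom Y Z)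
    (f' : hom X' Y') (g' : hom Y' Z') :
  (f ;; g) ⊗ (f' ;; g') = (f ⊗ f') ;; (g ⊗ g').
Proof. exact: (tens_comp _ L). Qed.

Lemma tensMl {X Y Z W : ob S} (f : hom X Y) (g : hom Y Z) :
  (f ;; g) ⊗ idm W = (f ⊗ idm W) ;; (g ⊗ idm W).
Proof. by rewrite -tensM id_comp. Qed.

Lemma tensMr {X Y Z W : ob S} (f : hom X Y) (g : hom Y Z) :
  idm W ⊗ (f ;; g) = (idm W ⊗ f) ;; (idm W ⊗ g).
Proof. by rewrite -tensM id_comp. Qed.

Lemma tens_lr {X Y X' Y' : ob S} (f : hom X Y) (g : hom X' Y') :
  (f ⊗ idm X') ;; (idm Y ⊗ g) = f ⊗ g.
Proof. by rewrite -tensM id_comp comp_id. Qed.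

Lemma tens_rl {X Y X' Y' : ob S} (f : hom X Y) (g : hom X' Y') :
  (idm X ⊗ g) ;; (f ⊗ idm Y') = f ⊗ g.
Proof. by rewrite -tensM id_comp comp_id. Qed.

Lemma assocK (X Y Z : ob S) : assoc X Y Z ;; assoc_i X Y Z = idm _.
Proof. exact: (assoc_iso1 _ L). Qed.

Lemma assoc_iK (X Y Z : ob S) : assoc_i X Y Z ;; assoc X Y Z = idm _.
Proof. exact: (assoc_iso2 _ L). Qed.

Lemma luK (X : ob S) : lu X ;; lu_i X = idm _.
Proof. exact: (lu_iso1 _ L). Qed.

Lemma lu_iK (X : ob S) : lu_i X ;; lu X = idm _.
Proof. exact: (lu_iso2 _ L). Qed.

Lemma ruK (X : ob S) : ru X ;; ru_i X = idm _.
Proof. exact: (ru_iso1 _ L). Qed.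

Lemma ru_iK (X : ob S) : ru_i X ;; ru X = idm _.
Proof. exact: (ru_iso2 _ L). Qed.

Lemma split_epi_cancel {A B D : ob S} (p : hom A B) (q : hom B A) (x y : hom B D) :
  q ;; p = idm B -> p ;; x = p ;; y -> x = y.
Proof. by move=> qp pxy; rewrite -(id_comp x) -(id_comp y) -qp !compA pxy. Qed.

Lemma split_mono_cancel {A B D : ob S} (p : hom B D) (q : hom D B) (x y : hom A B) :
  p ;; q = idm B -> x ;; p = y ;; p -> x = y.
Proof. by move=> pq xpy; rewrite -(comp_id x) -(comp_id y) -pq -!compA xpy. Qed.

Lemma assoc_natural {X X' Y Y' Z Z' : ob S} (f : hom X X') (g : hom Y Y') (h : hom Z Z') :
  ((f ⊗ g) ⊗ h) ;; assoc X' Y' Z' = assoc X Y Z ;; (f ⊗ (g ⊗ h)).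
Proof. exact: (assoc_nat _ L). Qed.

Lemma assoc_i_natural {X X' Y Y' Z Z' : ob S} (f : hom X X') (g : hom Y Y') (h : hom Z Z') :
  (f ⊗ (g ⊗ h)) ;; assoc_i X' Y' Z' = assoc_i X Y Z ;; ((f ⊗ g) ⊗ h).
Proof.
apply: (split_mono_cancel (assoc X' Y' Z') (assoc_i X' Y' Z')); first exact: assocK.
by rewrite compA assoc_iK comp_id compA assoc_natural -compA assoc_iK id_comp.
Qed.

Lemma lu_natural {X Y : ob S} (f : hom X Y) : (idm I ⊗ f) ;; lu Y = lu X ;; f.
Proof. exact: (lu_nat _ L). Qed.

Lemma ru_natural {X Y : ob S} (f : hom X Y) : (f ⊗ idm I) ;; ru Y = ru X ;; f.
Proof. exact: (ru_nat _ L). Qed.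

Lemma lu_i_natural {X Y : ob S} (f : hom X Y) : lu_i X ;; (idm I ⊗ f) = f ;; lu_i Y.
Proof.
apply: (split_mono_cancel (lu Y) (lu_i Y)); first exact: luK.
by rewrite compA lu_natural -compA lu_iK id_comp compA lu_iK comp_id.
Qed.

Lemma ru_i_natural {X Y : ob S} (f : hom X Y) : ru_i X ;; (f ⊗ idm I) = f ;; ru_i Y.
Proof.
apply: (split_mono_cancel (ru Y) (ru_i Y)); first exact: ruK.
by rewrite compA ru_natural -compA ru_iK id_comp compA ru_iK comp_id.
Qed.

Lemma sym_natural {X X' Y Y' : ob S} (f : hom X X') (g : hom Y Y') :
  (f ⊗ g) ;; sym X' Y' = sym X Y ;; (g ⊗ f).
Proof. exact: (sym_nat _ L). Qed.

Lemma idI_tens_inj {X Y : ob S} (f g : hom X Y) : idm I ⊗ f = idm I ⊗ g -> f = g.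
Proof.
move=> fg; apply: (split_epi_cancel (lu X) (lu_i X)); first exact: lu_iK.
by rewrite -!lu_natural fg.
Qed.

Lemma tens_idI_inj {X Y : ob S} (f g : hom X Y) : f ⊗ idm I = g ⊗ idm I -> f = g.
Proof.
move=> fg; apply: (split_epi_cancel (ru X) (ru_i X)); first exact: ru_iK.
by rewrite -!ru_natural fg.
Qed.

Lemma assoc_triangle (X Y : ob S) : assoc X I Y ;; (idm X ⊗ lu Y) = ru X ⊗ idm Y.
Proof. exact: (triangle _ L). Qed.

Lemma assoc_pentagon (W X Y Z : ob S) :
  (assoc W X Y ⊗ idm Z) ;; assoc W (tob X Y) Z ;; (idm W ⊗ assoc X Y Z)
  = assoc (tob W X) Y Z ;; assoc W X (tob Y Z).
Proof. exact: (pentagon _ L). Qed.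

Lemma assoc_pentagon_i (W X Y Z : ob S) :
  assoc (tob W X) Y Z ;; assoc W X (tob Y Z) ;; (idm W ⊗ assoc_i X Y Z)
  = (assoc W X Y ⊗ idm Z) ;; assoc W (tob X Y) Z.
Proof.
by rewrite -assoc_pentagon !compA -tensMr assocK tens_idm comp_id.
Qed.

Lemma assoc_lu (X Y : ob S) : assoc I X Y ;; lu (tob X Y) = lu X ⊗ idm Y.
Proof.
apply: idI_tens_inj.
apply: (split_epi_cancel ((assoc I I X ⊗ idm Y) ;; assoc I (tob I X) Y)
                         (assoc_i I (tob I X) Y ;; (assoc_i I I X ⊗ idm Y))).
  rewrite compA -(compA (assoc_i I I X ⊗ idm Y)) -tensMl assoc_iK.
  by rewrite tens_idm id_comp assoc_iK.
rewrite tensMr -compA assoc_pentagon (compA (assoc (tob I I) X Y)) assoc_triangle -tens_idm.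
by rewrite -assoc_natural -assoc_triangle tensMl !compA assoc_natural.
Qed.

Lemma assoc_ru (X Y : ob S) : assoc X Y I ;; (idm X ⊗ ru Y) = ru (tob X Y).
Proof.
apply: tens_idI_inj.
apply: (split_mono_cancel (assoc X Y I) (assoc_i X Y I)); first exact: assocK.
rewrite -assoc_triangle -tens_idm compA assoc_natural -compA -assoc_pentagon tensMl !compA.
by rewrite -tensMr assoc_triangle -assoc_natural.
Qed.

Lemma lu_ru_unit : lu I = ru I.
Proof.
apply: tens_idI_inj.
have lu_II : lu (tob I I) = idm I ⊗ lu I.
  apply: (split_mono_cancel (lu I) (lu_i I)); first exact: luK.
  by rewrite lu_natural.
by rewrite -assoc_lu -assoc_triangle lu_II.
Qed.

Lemma lu_i_ru_i_unit : lu_i I = ru_i I.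
Proof. by rewrite -[RHS]comp_id -(luK I) lu_ru_unit -compA ru_iK id_comp. Qed.

Lemma lu_i_tens (X Y : ob S) : lu_i (tob X Y) = (lu_i X ⊗ idm Y) ;; assoc I X Y.
Proof.
by rewrite -[LHS]id_comp -(tens_idm X Y) -(lu_iK X) tensMl -assoc_lu !compA luK comp_id.
Qed.

Lemma tens_ru_i (X Y : ob S) : idm X ⊗ ru_i Y = ru_i (tob X Y) ;; assoc X Y I.
Proof.
rewrite -[LHS]id_comp -(ru_iK (tob X Y)) -assoc_ru !compA -tensMr ruK.
by rewrite tens_idm comp_id.
Qed.


Lemma comp2_prefix {A B D E : ob S} {p : hom B D} {q : hom D E} {s : hom B E} :
  p ;; q = s -> forall k : hom A B, k ;; p ;; q = k ;; s.
Proof. by move=> <- k; rewrite compA. Qed.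

Lemma comp3_prefix {A B D E F : ob S} {p : hom B D} {q : hom D E} {r : hom E F}
    {s : hom B F} :
  p ;; q ;; r = s -> forall k : hom A B, k ;; p ;; q ;; r = k ;; s.
Proof. by move=> <- k; rewrite !compA. Qed.

Lemma conv_mono {X Y : ob S} (c c' : hom X Y) : c ≤ c' -> conv c ≤ conv c'.
Proof.
move=> le_cc'.
by repeat first
  [exact: le_cc' | exact: le_hom_refl | apply: (comp_mono _ L) | apply: (tens_mono _ L)].
Qed.

Section Cartesian.
Hypothesis K : CartLaws S.
Local Notation cup X := (codisc X ;; copy X).
Local Notation cap X := (cocopy X ;; disc X).

Lemma zigzag_capL (X : ob S) :
  ru_i X ;; (idm X ⊗ cup X) ;; assoc_i X X X ;; (cap X ⊗ idm X) ;; lu X = idm X.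
Proof.
rewrite tensMr tensMl -!compA (comp3_prefix (frob_r _ K X)) -!compA.
by rewrite (cocopy_unit_r _ K X) id_comp (copy_unit_l _ K X).
Qed.

Lemma zigzag_capR (X : ob S) :
  lu_i X ;; (cup X ⊗ idm X) ;; assoc X X X ;; (idm X ⊗ cap X) ;; ru X = idm X.
Proof.
rewrite tensMr tensMl -!compA (comp3_prefix (frob_l _ K X)) -!compA.
by rewrite (cocopy_unit_l _ K X) id_comp (copy_unit_r _ K X).
Qed.

Definition name {X Y : ob S} (d : hom Y X) : hom I (tob Y X) := cup Y ;; (idm Y ⊗ d).

Definition unname {X Y : ob S} (n : hom I (tob Y X)) : hom Y X :=
  ru_i Y ;; (idm Y ⊗ n) ;; assoc_i Y Y X ;; (cap Y ⊗ idm X) ;; lu X.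

Lemma nameK {X Y : ob S} (d : hom Y X) : unname (name d) = d.
Proof.
rewrite /unname /name tensMr -!compA (comp2_prefix (assoc_i_natural _ _ _)) tens_idm.
rewrite -!compA (comp2_prefix (tens_rl _ _)) -(tens_lr (cap Y) d) -!compA.
by rewrite (comp2_prefix (lu_natural _)) -compA zigzag_capL id_comp.
Qed.

Lemma zigzag_capR_tens (Y X : ob S) :
  lu_i (tob Y X) ;; (cup Y ⊗ idm (tob Y X)) ;; assoc Y Y (tob Y X) ;;
  (idm Y ⊗ assoc_i Y Y X) ;; (idm Y ⊗ (cap Y ⊗ idm X)) ;; (idm Y ⊗ lu X)
  = idm (tob Y X).
Proof.
rewrite lu_i_tens -(tens_idm Y X) (comp2_prefix (esym (assoc_natural _ _ _))) -!compA.
rewrite (comp3_prefix (assoc_pentagon_i _ _ _ _)) -!compA.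
rewrite (comp2_prefix (esym (assoc_natural _ _ _))) -!compA.
rewrite (comp2_prefix (assoc_triangle _ _)).
by rewrite -!tensMl zigzag_capR.
Qed.

Lemma unnameK {X Y : ob S} (n : hom I (tob Y X)) : name (unname n) = n.
Proof.
rewrite /unname /name !tensMr tens_ru_i -!compA -ru_i_natural.
rewrite (comp2_prefix (esym (assoc_natural _ _ _))) -!compA tens_idm.
rewrite (comp2_prefix (tens_lr _ _)) -(tens_rl (cup Y) n) -!compA -lu_i_ru_i_unit lu_i_natural.
by rewrite -[RHS]comp_id -{2}(zigzag_capR_tens Y X) !compA.
Qed.

Lemma conv_unname {X Y : ob S} (c : hom X Y) : conv c = unname (cup X ;; (c ⊗ idm X)).
Proof.
rewrite /conv /unname [in RHS]tensMr -!compA.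
by rewrite (comp2_prefix (assoc_i_natural _ _ _)) -!compA.
Qed.

Lemma name_conv {X Y : ob S} (c : hom X Y) : name (conv c) = cup X ;; (c ⊗ idm X).
Proof. by rewrite conv_unname unnameK. Qed.

Lemma cup_sym (X : ob S) : cup X ;; sym X X = cup X.
Proof. by rewrite compA (copy_comm _ K). Qed.

Lemma cup_conv_tens {X Y : ob S} (c : hom X Y) : cup Y ;; (conv c ⊗ idm Y) = name c.
Proof.
rewrite -{1}cup_sym compA -sym_natural -compA.
by rewrite -/(name (conv c)) name_conv compA sym_natural -compA cup_sym.
Qed.

Lemma convK {X Y : ob S} (c : hom X Y) : conv (conv c) = c.
Proof. by rewrite conv_unname cup_conv_tens nameK. Qed.

End Cartesian.

Section Boolean.
Hypothesis B : BoolLaws S.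
Local Notation "⊥" := (bbot _ _).
Local Notation "⊤" := (btop _ _).

Lemma meet_le_l {X Y : ob S} (a b : hom X Y) : bmeet a b ≤ a.
Proof. by case/(meet_glb _ B): (le_hom_refl (bmeet a b)). Qed.

Lemma meet_le_r {X Y : ob S} (a b : hom X Y) : bmeet a b ≤ b.
Proof. by case/(meet_glb _ B): (le_hom_refl (bmeet a b)). Qed.

Lemma join_le_l {X Y : ob S} (a b : hom X Y) : a ≤ bjoin a b.
Proof. by case/(join_lub _ B): (le_hom_refl (bjoin a b)). Qed.

Lemma join_le_r {X Y : ob S} (a b : hom X Y) : b ≤ bjoin a b.
Proof. by case/(join_lub _ B): (le_hom_refl (bjoin a b)). Qed.

Lemma meetC_le {X Y : ob S} (a b : hom X Y) : bmeet a b ≤ bmeet b a.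
Proof. by apply/(meet_glb _ B); split; [exact: meet_le_r | exact: meet_le_l]. Qed.

Lemma le_of_meet_bot_join_top {X Y : ob S} (a b x : hom X Y) :
  bmeet x a ≤ ⊥ -> ⊤ ≤ bjoin a b -> x ≤ b.
Proof.
move=> xa_bot ab_top.
have x_le : x ≤ bmeet x (bjoin a b).
  apply/(meet_glb _ B); split; first exact: le_hom_refl.
  exact: le_hom_trans (top_max _ B _ _ x) ab_top.
apply: le_hom_trans x_le _; rewrite (distrib _ B); apply/(join_lub _ B); split.
  exact: le_hom_trans xa_bot (bot_min _ B _ _ b).
exact: meet_le_r.
Qed.

Lemma compl_unique {X Y : ob S} (a b : hom X Y) :
  bmeet a b ≤ ⊥ -> ⊤ ≤ bjoin a b -> b = bneg a.
Proof.
move=> ab_bot ab_top; apply: (le_antisym _ L).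
  apply: (le_of_meet_bot_join_top a); last by rewrite (neg_join _ B); exact: le_hom_refl.
  exact: le_hom_trans (meetC_le b a) ab_bot.
apply: le_of_meet_bot_join_top ab_top.
by rewrite -(neg_meet _ B X Y a); exact: meetC_le.
Qed.

Section OrderIsomorphism.
Context {X Y X' Y' : ob S} {f : hom X Y -> hom X' Y'} {g : hom X' Y' -> hom X Y}.
Hypothesis f_mono : forall a b, a ≤ b -> f a ≤ f b.
Hypothesis g_mono : forall a b, a ≤ b -> g a ≤ g b.
Hypotheses (fK : cancel f g) (gK : cancel g f).

Lemma le_f_of {x : hom X' Y'} {a : hom X Y} : g x ≤ a -> x ≤ f a.
Proof. by move/f_mono; rewrite gK. Qed.

Lemma f_le_of {x : hom X' Y'} {a : hom X Y} : a ≤ g x -> f a ≤ x.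
Proof. by move/f_mono; rewrite gK. Qed.

Lemma order_iso_bneg (a : hom X Y) : f (bneg a) = bneg (f a).
Proof.
apply: compl_unique.
  apply: le_hom_trans _ (f_le_of (bot_min _ B _ _ (g ⊥))).
  apply: le_f_of; rewrite -(neg_meet _ B X Y a); apply/(meet_glb _ B).
  by split; rewrite -[t in _ ≤ t]fK; apply: g_mono; [exact: meet_le_l | exact: meet_le_r].
apply: le_hom_trans (le_f_of (top_max _ B _ _ (g ⊤))) _.
apply: f_le_of; rewrite -(neg_join _ B X Y a); apply/(join_lub _ B).
by split; rewrite -[t in t ≤ _]fK; apply: g_mono; [exact: join_le_l | exact: join_le_r].
Qed.

End OrderIsomorphism.
End Boolean.
End Monoidal.

Theorem lemma56 (C : PeirceanBicategory) (X Y : ob C) (c : hom X Y) :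
  conv (bneg c) = bneg (conv c).
Proof.
have L := cb_smc C; have K := cb_cart C.
exact: (order_iso_bneg L (pb_bool C) (conv_mono L) (conv_mono L) (convK L K) (convK L K)).
Qed.
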